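(* Assume that $L_h$ is hyperregular, i.e. its Legendre transform $T\Lambda^k_h\to T^*\Lambda^k_h$, $(\varphi^i,\dot\varphi^i)\mapsto(\varphi^i,\pi_j)$ with $M_i^{\ j}\pi_j=\partial L_h/\partial\dot\varphi^i$, is a diffeomorphism. Then the dynamics of the Hamiltonian system $(\omega_h,H_h)$, namely $$M^j_{\ k}\dot\varphi^k=\frac{\partial H_h}{\partial\pi_j},\qquad M_j^{\ k}\dot\pi_k=-\frac{\partial H_h}{\partial\varphi^j},$$ are equivalent to the semi-discrete Euler--Lagrange equations $$\frac{d}{dt}(\partial_3\mathcal{L},v)_{L^2\Lambda^k(\Sigma)}-(\partial_2\mathcal{L},v)_{L^2\Lambda^k(\Sigma)}-(\partial_4\mathcal{L},dv)_{L^2\Lambda^{k+1}(\Sigma)}=0\quad\text{for all }v\in\Lambda^k_h,$$ with $\mathcal{L}$ evaluated at $(x^\mu,\varphi,\dot\varphi,d\varphi)$, $\varphi=\varphi^iv_i$.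
   Context: $\Sigma$ is a reference Cauchy surface of a spacetime $X\cong\mathbb{R}\times\Sigma$, $I$ an interval, $d$ the exterior derivative on $\Sigma$. $\Lambda^k_h\subset H\Lambda^k(\Sigma)$ is a finite element space with basis $\{v_i\}$, part of a subcomplex with cochain projections. The instantaneous Lagrangian density $\mathcal{L}(x^\mu,\varphi,\dot\varphi,d\varphi)$ is an $n$-form on $\Sigma$, with $\partial_2,\partial_3,\partial_4$ the $L^2$ Riesz representatives of its variations in $\varphi,\dot\varphi,d\varphi$. The semi-discrete Lagrangian is $L_h(t,\varphi^i,\dot\varphi^i)=\int_\Sigma\mathcal{L}(x^\mu,\varphi^iv_i,\dot\varphi^iv_i,\varphi^idv_i)$. $M$ is the mass matrix $M_i^{\ j}=(v_i,v_j)_{L^2}$, with $M_j^{\ k}$ denoting row $j$, column $k$ of $M$ and $M^j_{\ k}$ that of $M^T$. On $T^*\Lambda^k_h$ with coordinates $\varphi=\varphi^iv_i$, $\pi=\pi_iv^i$ ($v^i=(\cdot,v_i)_{L^2}$), $\omega_h=d\varphi^i\wedge M_i^{\ j}d\pi_j$. The semi-discrete Hamiltonian is $H_h(t,\varphi^i,\pi_i)=M_i^{\ j}\pi_j\dot\varphi^i-L_h(t,\varphi^i,\dot\varphi^i)$, with $\dot\varphi$ expressed via the inverse Legendre transform. *)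

From HB Require Import structures.
From mathcomp Require Import all_boot all_order all_algebra.
From mathcomp Require Import all_classical all_reals all_analysis.
Set Implicit Arguments. Unset Strict Implicit. Unset Printing Implicit Defensive.
Import Order.TTheory GRing.Theory Num.Theory.
Import numFieldNormedType.Exports.
Local Open Scope classical_set_scope.
Local Open Scope ring_scope.

(* Abstract setting: V models H Lambda^k(Sigma) with the L^2 inner product ipV,
   W models L^2 Lambda^(k+1)(Sigma) with ipW, d : V -> W the exterior derivative,
   v : 'I_N -> V the basis {v_i} of Lambda^k_h.
   Lint t phi phidot psi = \int_Sigma Lcal(x^mu, phi, phidot, psi)  (t = x^0). *)

Definition inner_product (R : realType) (V : lmodType R) (ip : V -> V -> R) :=
  [/\ (forall x y, ip x y = ip y x),
      (forall a x y z, ip (a *: x + y) z = a * ip x z + ip y z)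
    & (forall x, x != 0 -> 0 < ip x x)].

Definition lin_indep (R : realType) (V : lmodType R) (N : nat) (v : 'I_N -> V) :=
  forall c : 'rV[R]_N, \sum_(i < N) c 0 i *: v i = 0 -> c = 0.

Definition comb (R : realType) (V : lmodType R) (N : nat) (v : 'I_N -> V)
  (c : 'rV[R]_N) : V := \sum_(i < N) c 0 i *: v i.

Definition mass (R : realType) (V : lmodType R) (N : nat) (ipV : V -> V -> R)
  (v : 'I_N -> V) : 'M[R]_N := \matrix_(i, j) ipV (v i) (v j).

Definition Lh (R : realType) (V W : lmodType R) (N : nat)
  (Lint : R -> V -> V -> W -> R) (d : V -> W) (v : 'I_N -> V)
  (t : R) (phi phid : 'rV[R]_N) : R :=
  Lint t (comb v phi) (comb v phid) (\sum_(i < N) phi 0 i *: d (v i)).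

Definition pd (R : realType) (N : nat) (f : 'rV[R]_N -> R) (x : 'rV[R]_N)
  (i : 'I_N) : R := derive f x (delta_mx 0 i).

Definition momentum (R : realType) (V W : lmodType R) (N : nat)
  (ipV : V -> V -> R) (Lint : R -> V -> V -> W -> R) (d : V -> W)
  (v : 'I_N -> V) (t : R) (phi phid : 'rV[R]_N) : 'rV[R]_N :=
  (\row_i pd (Lh Lint d v t phi) phid i) *m invmx (mass ipV v)^T.

Definition legendre (R : realType) (V W : lmodType R) (N : nat)
  (ipV : V -> V -> R) (Lint : R -> V -> V -> W -> R) (d : V -> W)
  (v : 'I_N -> V) (t : R) (p : 'rV[R]_N * 'rV[R]_N) : 'rV[R]_N * 'rV[R]_N :=
  (p.1, momentum ipV Lint d v t p.1 p.2).

Definition diffeo (R : realType) (X : normedModType R)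
  (f g : X -> X) :=
  [/\ cancel f g, cancel g f,
      (forall x, differentiable f x) & (forall y, differentiable g y)].

(* semi-discrete Hamiltonian; vinv t phi pi is the velocity phidot given by
   the inverse Legendre transform *)
Definition Hh (R : realType) (V W : lmodType R) (N : nat)
  (ipV : V -> V -> R) (Lint : R -> V -> V -> W -> R) (d : V -> W)
  (v : 'I_N -> V) (vinv : R -> 'rV[R]_N -> 'rV[R]_N -> 'rV[R]_N)
  (t : R) (phi pi : 'rV[R]_N) : R :=
  let phid := vinv t phi pi in
  \sum_(i < N) (\sum_(j < N) mass ipV v i j * pi 0 j) * phid 0 i
  - Lh Lint d v t phi phid.

Definition hamilton_eqs (R : realType) (V W : lmodType R) (N : nat)
  (ipV : V -> V -> R) (Lint : R -> V -> V -> W -> R) (d : V -> W)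
  (v : 'I_N -> V) (vinv : R -> 'rV[R]_N -> 'rV[R]_N -> 'rV[R]_N)
  (I : set R) (phi pi : R -> 'rV[R]_N) :=
  forall t, I t ->
  [/\ derivable phi t 1, derivable pi t 1,
      (forall j, (derive1 phi t *m mass ipV v) 0 j
                 = pd (Hh ipV Lint d v vinv t (phi t)) (pi t) j)
    & (forall j, (derive1 pi t *m (mass ipV v)^T) 0 j
                 = - pd (fun x => Hh ipV Lint d v vinv t x (pi t)) (phi t) j)].

Definition euler_lagrange (R : realType) (V W : lmodType R) (N : nat)
  (ipV : V -> V -> R) (ipW : W -> W -> R)
  (d2 d3 : R -> V -> V -> W -> V) (d4 : R -> V -> V -> W -> W)
  (d : V -> W) (v : 'I_N -> V) (I : set R) (phi : R -> 'rV[R]_N) :=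
  forall t, I t ->
  derivable phi t 1 /\
  forall c : 'rV[R]_N,
    let w := comb v c in
    let args s := (comb v (phi s), comb v (derive1 phi s),
                   \sum_(i < N) phi s 0 i *: d (v i)) in
    is_derive t (1 : R)
      (fun s => ipV (d3 s (args s).1.1 (args s).1.2 (args s).2) w)
      (ipV (d2 t (args t).1.1 (args t).1.2 (args t).2) w
       + ipW (d4 t (args t).1.1 (args t).1.2 (args t).2) (d w)).

From HB Require Import structures.
From mathcomp Require Import all_boot all_order all_algebra.
From mathcomp Require Import all_classical all_reals all_analysis.
From mathcomp Require Import lra.
Import Order.TTheory GRing.Theory Num.Theory.
Import numFieldNormedType.Exports.
Local Open Scope classical_set_scope.
Local Open Scope ring_scope.

(* Write H_h(φ, π) = ⟨Mπ, φ̇⟩ - L_h(φ, φ̇) with φ̇ = φ̇(φ, π) given by the inverse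
   Legendre map. Since Mπ = ∂L_h/∂φ̇, the terms containing the derivative of
   φ̇(φ, π) cancel (envelope identity), so ∂H_h/∂π = Mφ̇ and ∂H_h/∂φ = -∂L_h/∂φ.
   As the mass matrix is invertible, the first Hamilton equation says that π is
   the Legendre momentum of (φ, φ̇), and the second then reads
   d/dt (∂L_h/∂φ̇) = ∂L_h/∂φ. The Riesz representatives identify ∂L_h/∂φ̇^i with
   (∂_3 L, v_i) and ∂L_h/∂φ^i with (∂_2 L, v_i) + (∂_4 L, d v_i), so this is the
   Euler-Lagrange equation tested on the basis, hence on all of Λ^k_h. *)

Set Implicit Arguments. Unset Strict Implicit. Unset Printing Implicit Defensive.

Section InnerProduct.
Variables (R : realType) (V : lmodType R) (ip : V -> V -> R).
Hypothesis ipP : inner_product ip.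

Lemma ip_linearr a x y z : ip z (a *: x + y) = a * ip z x + ip z y.
Proof. by case: ipP => ipC ipDl _; rewrite ipC ipDl !(ipC z). Qed.

Lemma ip0r z : ip z 0 = 0.
Proof.
have := ip_linearr 1 0 0 z; rewrite scaler0 addr0 mul1r => ip0D.
by apply: (@addrI _ (ip z 0)); rewrite addr0 -ip0D.
Qed.

Lemma ip_combr n (w : 'I_n -> V) (c : 'rV[R]_n) z :
  ip z (comb w c) = \sum_(i < n) c 0 i * ip z (w i).
Proof.
rewrite /comb; elim/big_rec2: _ => [|i y1 y2 _ <-]; first exact: ip0r.
by rewrite ip_linearr.
Qed.

Lemma mass_tr n (w : 'I_n -> V) : (mass ip w)^T = mass ip w.
Proof. by apply/matrixP => i j; rewrite !mxE; case: ipP. Qed.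

Lemma mul_row_mass n (w : 'I_n -> V) (c : 'rV[R]_n) j :
  (c *m mass ip w) 0 j = ip (comb w c) (w j).
Proof.
case: ipP => ipC _ _; rewrite mxE ipC ip_combr.
by apply: eq_bigr => i _; rewrite mxE ipC.
Qed.

Lemma mass_unitmx n (w : 'I_n -> V) : lin_indep w -> mass ip w \in unitmx.
Proof.
move=> w_indep; have mass_inj (c : 'rV[R]_n) : c *m mass ip w = 0 -> c = 0.
  move=> c_ker; apply: w_indep; apply/eqP; apply: contraT => comb_neq0.
  suff : ip (comb w c) (comb w c) = 0.
    by case: ipP => _ _ /(_ _ comb_neq0) /[swap] ->; rewrite ltxx.
  rewrite {2}/comb ip_combr big1 // => j _.
  by rewrite -mul_row_mass c_ker mxE mulr0.
rewrite -row_free_unit -kermx_eq0; apply/eqP/row_matrixP => i.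
by rewrite row0; apply: mass_inj; rewrite -row_mul mulmx_ker row0.
Qed.

End InnerProduct.

Section Comb.
Variables (R : realType) (V W : lmodType R) (n : nat) (w : 'I_n -> V).

Lemma comb_delta i : comb w (delta_mx 0 i) = w i.
Proof.
rewrite /comb (bigD1 i) //= mxE !eqxx scale1r big1 ?addr0 // => j /negbTE ji.
by rewrite mxE ji andbF scale0r.
Qed.

Lemma comb_linearP a x y : comb w (a *: x + y) = a *: comb w x + comb w y.
Proof.
rewrite /comb scaler_sumr -big_split; apply: eq_bigr => i _.
by rewrite !mxE scalerDl scalerA.
Qed.

Lemma linear_comb (f : {linear V -> W}) c : f (comb w c) = comb (f \o w) c.
Proof. by rewrite /comb linear_sum; apply: eq_bigr => i _; rewrite linearZ. Qed.

End Comb.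

Section DirectionalDerivative.
Variables (R : realType) (U V W : normedModType R).

Lemma derive_line (f : U -> W) x w :
  'D_w f x = 'D_1 (fun h : R => f (x + h *: w)) 0.
Proof.
rewrite /derive; set g1 := fun h => _; set g2 := fun h => _.
suff -> : g1 = g2 by [].
apply/funext => h; rewrite /g1 /g2 /=.
by rewrite [_%:A]mulr1 !addr0 scale0r addr0 [h *: w + x]addrC.
Qed.

Lemma derive_pairl (f : U * V -> W) a b w :
  'D_w (fun x => f (x, b)) a = 'D_(w, 0) f (a, b).
Proof.
rewrite /derive; set g1 := fun h => _; set g2 := fun h => _.
suff -> : g1 = g2 by [].
apply/funext => h; rewrite /g1 /g2 /=.
by rewrite -[h *: (w, 0)]/(h *: w, h *: 0) scaler0 -[(_, 0) + _]/(_ + _, 0 + _) add0r.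
Qed.

Lemma derive_pairr (f : U * V -> W) a b w :
  'D_w (fun y => f (a, y)) b = 'D_(0, w) f (a, b).
Proof.
rewrite /derive; set g1 := fun h => _; set g2 := fun h => _.
suff -> : g1 = g2 by [].
apply/funext => h; rewrite /g1 /g2 /=.
by rewrite -[h *: (0, w)]/(h *: 0, h *: w) scaler0 -[(0, _) + _]/(0 + _, _ + _) add0r.
Qed.

Lemma is_derive_diff (f : U -> W) x w :
  differentiable f x -> is_derive x w f ('d f x w).
Proof. by move=> df; apply: DeriveDef; [exact: diff_derivable | exact: deriveE]. Qed.

Lemma is_derive_linear (l : {linear U -> W}) x w :
  continuous l -> is_derive x w l (l w).
Proof.
by move=> l_cont; have := is_derive_diff w (linear_differentiable x l_cont); rewrite diff_lin.
Qed.

Lemma is_derive_comp_diff (f : U -> V) (g : V -> W) x w :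
  differentiable f x -> differentiable g (f x) ->
  is_derive x w (g \o f) ('d g (f x) ('d f x w)).
Proof.
by move=> df dg; have := is_derive_diff w (differentiable_comp df dg); rewrite diff_comp.
Qed.

End DirectionalDerivative.

Lemma fst_continuous (R : realType) (U V : normedModType R) : continuous (@fst U V).
Proof. by move=> [a b]; exact: cvg_fst. Qed.

Lemma snd_continuous (R : realType) (U V : normedModType R) : continuous (@snd U V).
Proof. by move=> [a b]; exact: cvg_snd. Qed.

Section ProductDerivative.
Variables (R : realType) (U V W : normedModType R).

Lemma diff_fst_id (g : U * V -> U * W) x w :
  (forall y, (g y).1 = y.1) -> differentiable g x -> ('d g x w).1 = w.1.
Proof.
move=> g_fst dg.
have dfst_g :=
  is_derive_comp_diff w dg (linear_differentiable (g x) (@fst_continuous R U W)).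
have dfst := is_derive_linear x w (@fst_continuous R U V).
rewrite diff_lin in dfst_g; last exact: fst_continuous.
have : 'D_w (fst \o g) x = 'D_w fst x by congr derive; apply/funext => y; exact: g_fst.
by rewrite !derive_val.
Qed.

End ProductDerivative.

Section MatrixValued.
Variables (R : realType) (V : normedModType R).

Lemma is_derive_mxP m n (f : V -> 'M[R]_(m, n)) x w D :
  is_derive x w f D <-> forall i j, is_derive x w (fun y => f y i j) (D i j).
Proof.
split=> [[df <-] i j | dfij].
  have dfij := (derivable_mxP f x w).1 df i j.
  by apply: DeriveDef => //; rewrite derive_mx // mxE.
have df : derivable f x w by apply/derivable_mxP => i j; case: (dfij i j).
apply: DeriveDef => //; apply/matrixP => i j.
by rewrite derive_mx // mxE; case: (dfij i j).
Qed.

Lemma is_derive_mulmxr m n p (f : V -> 'M[R]_(m, n)) (A : 'M[R]_(n, p)) x w D :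
  is_derive x w f D -> is_derive x w (fun y => f y *m A) (D *m A).
Proof.
move=> /is_derive_mxP dfij; apply/is_derive_mxP => i k; rewrite mxE.
have -> : (fun y => (f y *m A) i k) = \sum_j (fun y => f y i j * A j k).
  by apply/funext => y; rewrite fct_sumE mxE.
apply: is_derive_sum => j.
apply: is_derive_eq (is_deriveM (dfij i j) (is_derive_cst (A j k) x w)) _.
by rewrite scaler0 add0r mulrC.
Qed.

End MatrixValued.

Lemma linear_pairE (R : realType) (U : lmodType R) N
    (l : {linear (U * 'rV[R]_N)%type -> R}) a b :
  l (a, b) = l (a, 0) + \sum_(i < N) b 0 i * l (0, delta_mx 0 i).
Proof.
have -> : (a, b) = (a, 0) + (0, b) by rewrite -[RHS]/(a + 0, 0 + b) addr0 add0r.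
have -> : ((0 : U), b) = \sum_(i < N) b 0 i *: (0, delta_mx 0 i).
  rewrite [b in LHS]row_sum_delta.
  elim/big_rec2: _ => [//|i c p _ <-].
  by rewrite -[RHS]/(_ *: 0 + 0, _ *: 'e_i + p) scaler0 addr0.
rewrite linearD linear_sum; congr (_ + _).
by apply: eq_bigr => i _; rewrite linearZ.
Qed.

Section LegendreDuality.
Variables (R : realType) (N : nat) (M : 'M[R]_N).
Local Notation X := ('rV[R]_N * 'rV[R]_N)%type.
Variables (L : X -> R) (g : X -> X) (q : X).
Hypotheses (L_diff : differentiable L (g q)) (g_diff : differentiable g q).
Hypothesis g_fst : forall x, (g x).1 = x.1.
Hypothesis dL_momentum :
  forall i, 'd L (g q) (0, delta_mx 0 i) = \sum_j M i j * q.2 0 j.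

(* Envelope identity: by dL_momentum the contributions of 'd g cancel. *)
Lemma is_derive_legendre_dual w :
  is_derive q w (fun x => \sum_i (\sum_j M i j * x.2 0 j) * (g x).2 0 i - L (g x))
    (\sum_i (\sum_j M i j * w.2 0 j) * (g q).2 0 i - 'd L (g q) (w.1, 0)).
Proof.
have dsnd_g i : is_derive q w (fun x => (g x).2 0 i) (('d g q w).2 0 i).
  have := is_derive_comp_diff w g_diff
    (linear_differentiable (g q) (@snd_continuous R _ _)).
  by rewrite diff_lin; [move=> /is_derive_mxP; apply | exact: snd_continuous].
have dmom i : is_derive q w (fun x => \sum_j M i j * x.2 0 j) (\sum_j M i j * w.2 0 j).
  have -> : (fun x : X => \sum_j M i j * x.2 0 j) = \sum_j (fun x : X => M i j * x.2 0 j).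
    by apply/funext => x; rewrite fct_sumE.
  move: (is_derive_linear q w (@snd_continuous R _ _)) => /is_derive_mxP dsnd.
  exact: is_derive_sum.
have dLg : is_derive q w (L \o g) ('d L (g q) ('d g q w)).
  exact: is_derive_comp_diff.
have := is_deriveB (is_derive_sum (fun i => is_deriveM (dmom i) (dsnd_g i))) dLg.
have -> : \sum_i ((fun x : X => \sum_j M i j * x.2 0 j) * (fun x => (g x).2 0 i))
          - (L \o g) = (fun x => \sum_i (\sum_j M i j * x.2 0 j) * (g x).2 0 i - L (g x)).
  by apply/funext => x /=; rewrite fct_sumE.
move=> /is_derive_eq; apply.
have -> : 'd g q w = (w.1, ('d g q w).2).
  by rewrite -(diff_fst_id w g_fst g_diff); case: ('d g q w).
rewrite linear_pairE big_split /=.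
have -> : \sum_i (\sum_j M i j * q.2 0 j) *: ('d g q w).2 0 i
          = \sum_i ('d g q w).2 0 i * 'd L (g q) (0, delta_mx 0 i).
  by apply: eq_bigr => i _; rewrite dL_momentum mulrC.
have -> : \sum_i (g q).2 0 i *: (\sum_j M i j * w.2 0 j)
          = \sum_i (\sum_j M i j * w.2 0 j) * (g q).2 0 i.
  by apply: eq_bigr => i _; rewrite mulrC.
lra.
Qed.

End LegendreDuality.

Lemma sum_mul_delta (R : pzSemiRingType) n (a : 'I_n -> R) j :
  \sum_(k < n) a k * (delta_mx 0 j : 'rV[R]_n) 0 k = a j.
Proof.
rewrite (bigD1 j) //= mxE !eqxx mulr1 big1 ?addr0 // => k /negbTE kj.
by rewrite mxE kj mulr0.
Qed.

Section SemiDiscrete.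
Variables (R : realType) (V W : lmodType R) (N : nat)
  (ipV : V -> V -> R) (ipW : W -> W -> R) (d : {linear V -> W}) (v : 'I_N -> V)
  (Lint : R -> V -> V -> W -> R)
  (d2 d3 : R -> V -> V -> W -> V) (d4 : R -> V -> V -> W -> W)
  (vinv : R -> 'rV[R]_N -> 'rV[R]_N -> 'rV[R]_N).
Hypotheses (ipV_ip : inner_product ipV) (ipW_ip : inner_product ipW).
Hypothesis v_indep : lin_indep v.
Hypothesis Lint_variation : forall t phi phid psi (a1 a2 : V) (a3 : W),
  is_derive (0 : R) (1 : R)
    (fun s => Lint t (phi + s *: a1) (phid + s *: a2) (psi + s *: a3))
    (ipV (d2 t phi phid psi) a1 + ipV (d3 t phi phid psi) a2
     + ipW (d4 t phi phid psi) a3).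
Hypothesis Lh_diff : forall t (p : 'rV[R]_N * 'rV[R]_N),
  differentiable (fun q : 'rV[R]_N * 'rV[R]_N => Lh Lint d v t q.1 q.2) p.
Hypothesis hyperregular : forall t,
  diffeo (legendre ipV Lint d v t) (fun q => (q.1, vinv t q.1 q.2)).

Local Notation M := (mass ipV v).
Local Notation L := (Lh Lint d v).
Local Notation momentum := (momentum ipV Lint d v).
Local Notation H := (Hh ipV Lint d v vinv).
Local Notation Lpair t := (fun q : 'rV[R]_N * 'rV[R]_N => L t q.1 q.2).

Definition dLh_dphid t phi phid : 'rV[R]_N := \row_i pd (L t phi) phid i.

Definition dLh_dphi t phi phid : 'rV[R]_N := \row_i pd (fun x => L t x phid) phi i.

Lemma dLh_dphidE t phi phid i :
  dLh_dphid t phi phid 0 i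
  = ipV (d3 t (comb v phi) (comb v phid) (comb (d \o v) phi)) (v i).
Proof.
rewrite mxE /pd derive_line.
have -> : (fun h => L t phi (phid + h *: delta_mx 0 i)) = fun s =>
    Lint t (comb v phi + s *: 0) (comb v phid + s *: v i) (comb (d \o v) phi + s *: 0).
  by apply/funext => s; rewrite !scaler0 !addr0 /Lh addrC comb_linearP comb_delta addrC.
by rewrite derive_val (ip0r ipV_ip) (ip0r ipW_ip) add0r addr0.
Qed.

Lemma dLh_dphiE t phi phid i :
  dLh_dphi t phi phid 0 i
  = ipV (d2 t (comb v phi) (comb v phid) (comb (d \o v) phi)) (v i)
    + ipW (d4 t (comb v phi) (comb v phid) (comb (d \o v) phi)) (d (v i)).
Proof.
rewrite mxE /pd derive_line.
have -> : (fun h => L t (phi + h *: delta_mx 0 i) phid) = fun s =>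
    Lint t (comb v phi + s *: v i) (comb v phid + s *: 0) (comb (d \o v) phi + s *: d (v i)).
  apply/funext => s; rewrite scaler0 addr0 /Lh addrC.
  by rewrite -[\sum__ _]/(comb (d \o v) _) !comb_linearP !comb_delta ![_ + comb _ _]addrC.
by rewrite derive_val (ip0r ipV_ip) addr0.
Qed.

Lemma momentum_mass t phi phid : momentum t phi phid *m M = dLh_dphid t phi phid.
Proof. by rewrite /momentum mass_tr // mulmxKV // mass_unitmx. Qed.

Lemma momentum_vinv t phi pi : momentum t phi (vinv t phi pi) = pi.
Proof. by case: (hyperregular t) => _ /(_ (phi, pi)) /(congr1 snd). Qed.

Lemma vinv_momentum t phi phid : vinv t phi (momentum t phi phid) = phid.
Proof. by case: (hyperregular t) => /(_ (phi, phid)) /(congr1 snd). Qed.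

Lemma is_derive_Hh t phi pi w :
  is_derive (phi, pi) w (fun q => H t q.1 q.2)
    (\sum_i (\sum_j M i j * w.2 0 j) * vinv t phi pi 0 i
     - 'd (Lpair t) (phi, vinv t phi pi) (w.1, 0)).
Proof.
apply: (is_derive_legendre_dual (g := fun q => (q.1, vinv t q.1 q.2))) => //=.
  by case: (hyperregular t).
move=> i; rewrite -deriveE // -derive_pairr.
transitivity (dLh_dphid t phi (vinv t phi pi) 0 i); first by rewrite mxE.
rewrite -momentum_mass momentum_vinv mxE.
by case: ipV_ip => ipC _ _; apply: eq_bigr => j _; rewrite mulrC !mxE ipC.
Qed.

Lemma pd_Hh_pi t phi pi j : pd (H t phi) pi j = (vinv t phi pi *m M) 0 j.
Proof.
rewrite /pd -[H t phi]/(fun y => H t (phi, y).1 (phi, y).2).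
rewrite (derive_pairr (fun q => H t q.1 q.2)).
have /@derive_val -> := is_derive_Hh t phi pi (0, delta_mx 0 j).
rewrite /= linear0 subr0 mxE.
by apply: eq_bigr => i _; rewrite sum_mul_delta mulrC.
Qed.

Lemma pd_Hh_phi t phi pi j :
  pd (fun x => H t x pi) phi j = - dLh_dphi t phi (vinv t phi pi) 0 j.
Proof.
rewrite /pd -[fun x => H t x pi]/(fun x => H t (x, pi).1 (x, pi).2).
rewrite (derive_pairl (fun q => H t q.1 q.2)).
have /@derive_val -> := is_derive_Hh t phi pi (delta_mx 0 j, 0).
rewrite /= big1 ?sub0r => [|i _]; last first.
  by rewrite big1 ?mul0r // => k _; rewrite !mxE mulr0.
by rewrite -(deriveE _ (Lh_diff _ _)) -derive_pairl mxE.
Qed.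

Lemma hamilton_eqs_at t phi pi phid pid :
  (forall j, (phid *m M) 0 j = pd (H t phi) pi j) /\
  (forall j, (pid *m M^T) 0 j = - pd (fun x => H t x pi) phi j)
  <-> pi = momentum t phi phid /\ pid *m M = dLh_dphi t phi phid.
Proof.
have M_unit := mass_unitmx ipV_ip v_indep; rewrite mass_tr //.
split => [[vel force] | [-> force]].
  have phidE : phid = vinv t phi pi.
    by apply: (can_inj (mulmxK M_unit)); apply/rowP => j; rewrite vel pd_Hh_pi.
  split; first by rewrite phidE momentum_vinv.
  by apply/rowP => j; rewrite force pd_Hh_phi opprK -phidE.
by split => j; rewrite ?pd_Hh_pi ?pd_Hh_phi vinv_momentum ?opprK ?force.
Qed.

Lemma ip_d3_combE t phi phid c :
  ipV (d3 t (comb v phi) (comb v phid) (comb (d \o v) phi)) (comb v c)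
  = (dLh_dphid t phi phid *m c^T) 0 0.
Proof.
rewrite (ip_combr ipV_ip) mxE; apply: eq_bigr => i _.
by rewrite dLh_dphidE !mxE mulrC.
Qed.

Lemma ip_d2_d4_combE t phi phid c :
  ipV (d2 t (comb v phi) (comb v phid) (comb (d \o v) phi)) (comb v c)
  + ipW (d4 t (comb v phi) (comb v phid) (comb (d \o v) phi)) (d (comb v c))
  = (dLh_dphi t phi phid *m c^T) 0 0.
Proof.
rewrite linear_comb (ip_combr ipV_ip) (ip_combr ipW_ip) -big_split mxE.
apply: eq_bigr => i _.
by rewrite dLh_dphiE !mxE mulrDl ![_ * c 0 i]mulrC.
Qed.

Lemma euler_lagrange_rowP I phi :
  euler_lagrange ipV ipW d2 d3 d4 d v I phi <->
  forall t, I t -> derivable phi t 1 /\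
    is_derive t 1 (fun s => dLh_dphid s (phi s) (derive1 phi s))
      (dLh_dphi t (phi t) (derive1 phi t)).
Proof.
split => EL t It; have [dphi EL_t] := EL t It; split=> [//|].
  apply/is_derive_mxP => i j; rewrite (ord1 i).
  have -> : (fun s => dLh_dphid s (phi s) (derive1 phi s) 0 j) = fun s =>
      ipV (d3 s (comb v (phi s)) (comb v (derive1 phi s)) (comb (d \o v) (phi s))) (v j).
    by apply/funext => s; exact: dLh_dphidE.
  rewrite dLh_dphiE -(comb_delta v j).
  exact: EL_t.
move=> c /=; rewrite ip_d2_d4_combE.
have -> : (fun s => ipV (d3 s (comb v (phi s)) (comb v (derive1 phi s))
                             (comb (d \o v) (phi s))) (comb v c))
          = fun s => (dLh_dphid s (phi s) (derive1 phi s) *m c^T) 0 0.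
  by apply/funext => s; exact: ip_d3_combE.
by move/(is_derive_mulmxr c^T)/is_derive_mxP: EL_t; apply.
Qed.

Lemma hamilton_eqs_euler_lagrange I phi pi :
  open I -> hamilton_eqs ipV Lint d v vinv I phi pi ->
  euler_lagrange ipV ipW d2 d3 d4 d v I phi /\
  forall t, I t -> pi t = momentum t (phi t) (derive1 phi t).
Proof.
move=> I_open HE.
have hamilton_t t : I t ->
    pi t = momentum t (phi t) (derive1 phi t) /\
    derive1 pi t *m M = dLh_dphi t (phi t) (derive1 phi t).
  by move=> It; have [_ _ vel force] := HE t It; apply/hamilton_eqs_at.
split=> [|t /hamilton_t []//]; apply/euler_lagrange_rowP => t It.
have [dphi dpi _ _] := HE t It; split; first exact: dphi.
rewrite -(hamilton_t t It).2 derive1E.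
apply: near_eq_is_derive (is_derive_mulmxr M (derivableP dpi)).
apply: filterS (open_nbhs_nbhs (conj I_open It)) => s Is.
by rewrite (hamilton_t s Is).1 momentum_mass.
Qed.

Lemma euler_lagrange_hamilton_eqs I phi pi :
  open I -> euler_lagrange ipV ipW d2 d3 d4 d v I phi ->
  (forall t, I t -> pi t = momentum t (phi t) (derive1 phi t)) ->
  hamilton_eqs ipV Lint d v vinv I phi pi.
Proof.
move=> I_open /euler_lagrange_rowP EL pi_momentum t It.
have M_unit := mass_unitmx ipV_ip v_indep.
have [dphi dP] := EL t It.
have dpi : is_derive t 1 pi (dLh_dphi t (phi t) (derive1 phi t) *m invmx M).
  apply: near_eq_is_derive (is_derive_mulmxr (invmx M) dP).
  apply: filterS (open_nbhs_nbhs (conj I_open It)) => s Is.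
  by rewrite (pi_momentum s Is) -momentum_mass mulmxK.
have pi'_M : derive1 pi t *m M = dLh_dphi t (phi t) (derive1 phi t).
  by rewrite derive1E derive_val mulmxKV.
have [vel force] := (hamilton_eqs_at t _ _ _ _).2 (conj (pi_momentum t It) pi'_M).
by split; [exact: dphi | case: dpi | exact: vel | exact: force].
Qed.

End SemiDiscrete.

Theorem mainTheorem7 (R : realType) (V W : lmodType R) (N : nat)
  (ipV : V -> V -> R) (ipW : W -> W -> R) (d : {linear V -> W})
  (v : 'I_N -> V)
  (Lint : R -> V -> V -> W -> R)
  (d2 d3 : R -> V -> V -> W -> V) (d4 : R -> V -> V -> W -> W)
  (vinv : R -> 'rV[R]_N -> 'rV[R]_N -> 'rV[R]_N)
  (I : set R) :
  inner_product ipV -> inner_product ipW -> lin_indep v ->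
  (* d2, d3, d4 are the L^2 Riesz representatives of the first variation *)
  (forall t phi phid psi (a1 a2 : V) (a3 : W),
     is_derive (0 : R) (1 : R)
       (fun s => Lint t (phi + s *: a1) (phid + s *: a2) (psi + s *: a3))
       (ipV (d2 t phi phid psi) a1 + ipV (d3 t phi phid psi) a2
        + ipW (d4 t phi phid psi) a3)) ->
  (* L_h is differentiable in (phi, phidot) *)
  (forall t (p : 'rV[R]_N * 'rV[R]_N),
     differentiable (fun q : 'rV[R]_N * 'rV[R]_N => Lh Lint d v t q.1 q.2) p) ->
  (* hyperregularity: the Legendre transform is a diffeomorphism, with inverse
     (phi, pi) |-> (phi, vinv t phi pi) *)
  (forall t, diffeo (legendre ipV Lint d v t)
                    (fun q => (q.1, vinv t q.1 q.2))) ->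
  is_interval I -> open I ->
  forall phi pi : R -> 'rV[R]_N,
    hamilton_eqs ipV Lint d v vinv I phi pi <->
    (euler_lagrange ipV ipW d2 d3 d4 d v I phi /\
     forall t, I t -> pi t = momentum ipV Lint d v t (phi t) (derive1 phi t)).
Proof.
move=> ipV_ip ipW_ip v_indep Lint_variation Lh_diff hyperregular _ I_open phi pi.
split => [|[]]; [exact: hamilton_eqs_euler_lagrange | exact: euler_lagrange_hamilton_eqs].
Qed.
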